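(* In the setting described in the context, consider the symmetrical case: all users have the same contention window $W$, the same packet error function $e_i=e$ (hence the same $G_i=G$), and the same rate interval $[R_{min},R_{max}]$, with $R_{min}$ sufficiently small and $R_{max}$ sufficiently large that the unique equilibrium $\mathbf R^*$ of $G_R(\mathbf W)$ satisfies $\partial S_i/\partial R_i=0$ for all $i$. Then this equilibrium is symmetrical: $R_i^*=R_j^*$ and $\rho_i^*=\rho_j^*$ for all $i,j\in\mathcal N$.
   Context: Model: users $\mathcal N=\{1,\dots,n\}$, fixed integer $m\ge1$. User $i$ has contention window $W_i$ and data rate $R_i\in[R_{min,i},R_{max,i}]$, and a packet error rate function $e_i$ with values in $[0,1]$; $G_i(R)=(1-e_i(R))R$. For $x\in[0,1]$, $\Gamma_i(x)=\frac{2}{W_i+1+xW_i\sum_{l=0}^{m-1}(2x)^l}$. Given $(W_j,R_j)_j$, the stationary state $(\tau_j,p_j,q_j)_j\in[0,1]^{3n}$ (assumed unique) solves $q_j=1-(1-p_j)(1-e_j(R_j))$, $\tau_j=\Gamma_j(q_j)$, $p_j=1-\prod_{k\ne j}(1-\tau_k)$; $\rho_j=1-\tau_j$. Utility of user $i$: $S_i=\frac{(1-\rho_i)\prod_{j\ne i}\rho_j\,G_i(R_i)}{1-\prod_{j}\rho_j}$. The game $G_R(\mathbf W)$: players $\mathcal N$, strategy sets $[R_{min,i},R_{max,i}]$, utilities $S_i$; it has a unique equilibrium (rate profile from which no player gains by unilateral deviation). Standing assumptions on $e$: $e(0)=0$, $e(R)\to1$ as $R\to\infty$; on the rate interval, $e$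 increasing, twice differentiable, strictly convex with $e'>0$ increasing; $G(0)=0$, $G(R)\to0$ as $R\to\infty$, $G$ strictly concave there. Non-atomic assumption (standing): a change of one user's strategy has negligible influence on the system state; $\prod_{j\ne i}\rho_j$ does not depend on user $i$'s own strategy, and $\prod_{j}\rho_j\simeq\prod_{j\ne i}\rho_j$. *)

From HB Require Import structures.
From mathcomp Require Import all_boot all_order all_algebra.
From mathcomp Require Import all_classical all_reals all_analysis.
Set Implicit Arguments. Unset Strict Implicit. Unset Printing Implicit Defensive.
Import Order.TTheory GRing.Theory Num.Theory.
Import numFieldNormedType.Exports.
Local Open Scope ring_scope.

Section Model.
Variable R : realType.

Definition Gamma (W m : nat) (x : R) : R :=
  2 / (W%:R + 1 + x * W%:R * \sum_(l < m) (2 * x) ^+ l).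

Definition goodput (e : R -> R) (r : R) : R := (1 - e r) * r.

Definition in01 (x : R) : bool := (0 <= x) && (x <= 1).

Definition stationary (n : nat) (W m : nat) (e : R -> R) (Rs : 'I_n -> R)
    (tau p q : 'I_n -> R) : Prop :=
  forall j : 'I_n,
    [/\ q j = 1 - (1 - p j) * (1 - e (Rs j)),
        tau j = Gamma W m (q j)
      & p j = 1 - \prod_(k < n | k != j) (1 - tau k)].

(* utility of user i, given the profile Rs and the attempt probabilities tau
   of the stationary state (rho_j = 1 - tau_j) *)
Definition utility (n : nat) (e : R -> R) (tau : 'I_n -> R) (i : 'I_n)
    (Rs : 'I_n -> R) : R :=
  (1 - (1 - tau i)) * (\prod_(j < n | j != i) (1 - tau j)) * goodput e (Rs i)
  / (1 - \prod_(j < n) (1 - tau j)).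

Definition upd (n : nat) (Rs : 'I_n -> R) (i : 'I_n) (r : R) : 'I_n -> R :=
  fun j => if j == i then r else Rs j.

Definition in_box (n : nat) (Rmin Rmax : R) (Rs : 'I_n -> R) : Prop :=
  forall j, Rmin <= Rs j <= Rmax.

Definition is_equilibrium (n : nat) (e : R -> R) (Rmin Rmax : R)
    (tauF : ('I_n -> R) -> 'I_n -> R) (Rs : 'I_n -> R) : Prop :=
  in_box Rmin Rmax Rs /\
  forall (i : 'I_n) (r : R), Rmin <= r <= Rmax ->
    utility e (tauF (upd Rs i r)) i (upd Rs i r) <= utility e (tauF Rs) i Rs.

Definition strictly_convex_on (a b : R) (f : R -> R) : Prop :=
  forall x y t : R, a <= x <= b -> a <= y <= b -> x != y -> 0 < t < 1 ->
    f (t * x + (1 - t) * y) < t * f x + (1 - t) * f y.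

Definition strictly_concave_on (a b : R) (f : R -> R) : Prop :=
  strictly_convex_on a b (fun x => - f x).

End Model.

From HB Require Import structures.
From mathcomp Require Import all_boot all_order all_algebra.
From mathcomp Require Import all_classical all_reals all_analysis.
From mathcomp Require Import perm.
Set Implicit Arguments. Unset Strict Implicit. Unset Printing Implicit Defensive.
Import Order.TTheory GRing.Theory Num.Theory.
Import numFieldNormedType.Exports.
Local Open Scope classical_set_scope.
Local Open Scope ring_scope.

(* The symmetric game is invariant under relabelling the users: a permutation
   of an admissible profile has the permuted stationary state (by uniqueness of
   the stationary state), hence permuted utilities, so the permutation of an
   equilibrium is again an equilibrium.  By uniqueness of the equilibrium it is
   fixed by every transposition of two users. *)

Section Relabelling.
Variable R : realType.
Variable n : nat.
Implicit Types (Rs tau p q : 'I_n -> R) (s : {perm 'I_n}).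

Lemma prod_neq_perm (f : 'I_n -> R) s i :
  \prod_(j < n | j != i) f (s j) = \prod_(j < n | j != s i) f j.
Proof.
rewrite [RHS](reindex_inj (@perm_inj _ s)) /=.
by apply: eq_bigl => k; rewrite (inj_eq (@perm_inj _ s)).
Qed.

Lemma stationary_perm W m (e : R -> R) Rs tau p q s :
  stationary W m e Rs tau p q ->
  stationary W m e (Rs \o s) (tau \o s) (p \o s) (q \o s).
Proof.
move=> st j; have [qj tauj pj] := st (s j).
split => //=; rewrite pj; congr (1 - _); exact: (esym (prod_neq_perm _ s j)).
Qed.

Lemma utility_perm (e : R -> R) tau Rs s i :
  utility e (tau \o s) i (Rs \o s) = utility e tau (s i) Rs.
Proof.
have prod_neq : \prod_(j < n | j != i) (1 - tau (s j))
              = \prod_(j < n | j != s i) (1 - tau j) := prod_neq_perm _ s i.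
rewrite /utility /comp prod_neq; congr (_ / (1 - _)).
by rewrite [RHS](reindex_inj (@perm_inj _ s)).
Qed.

Lemma upd_perm Rs s i r : upd (Rs \o s) i r = upd Rs (s i) r \o s.
Proof. by apply: funext => k; rewrite /upd /= (inj_eq (@perm_inj _ s)). Qed.

Lemma in_box_perm (Rmin Rmax : R) Rs s :
  in_box Rmin Rmax Rs -> in_box Rmin Rmax (Rs \o s).
Proof. by move=> box k; apply: box. Qed.

Lemma in_box_upd (Rmin Rmax : R) Rs i r :
  in_box Rmin Rmax Rs -> Rmin <= r <= Rmax -> in_box Rmin Rmax (upd Rs i r).
Proof. by move=> box r_in k; rewrite /upd; case: ifP. Qed.

Variables (W m : nat) (e : R -> R) (Rmin Rmax : R).
Variables tauF pF qF : ('I_n -> R) -> 'I_n -> R.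

Hypothesis stationaryF : forall Rs, in_box Rmin Rmax Rs ->
  (forall j, [/\ in01 (tauF Rs j), in01 (pF Rs j) & in01 (qF Rs j)]) /\
  stationary W m e Rs (tauF Rs) (pF Rs) (qF Rs).

Hypothesis stationary_uniq : forall Rs, in_box Rmin Rmax Rs -> forall tau p q,
  (forall j, [/\ in01 (tau j), in01 (p j) & in01 (q j)]) ->
  stationary W m e Rs tau p q ->
  [/\ tau = tauF Rs, p = pF Rs & q = qF Rs].

Lemma tauF_perm Rs s : in_box Rmin Rmax Rs -> tauF (Rs \o s) = tauF Rs \o s.
Proof.
move=> box; have [in01F st] := stationaryF box.
by case: (stationary_uniq (in_box_perm s box) (fun k => in01F (s k))
  (stationary_perm s st)) => <-.
Qed.

Lemma is_equilibrium_perm Rs s :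
  is_equilibrium e Rmin Rmax tauF Rs -> is_equilibrium e Rmin Rmax tauF (Rs \o s).
Proof.
case=> box best; split; first exact: in_box_perm.
move=> i r r_in; rewrite upd_perm !tauF_perm //; last exact: in_box_upd.
by rewrite !utility_perm; apply: best.
Qed.

Lemma unique_equilibrium_perm Rstar s :
  is_equilibrium e Rmin Rmax tauF Rstar ->
  (forall Rs, is_equilibrium e Rmin Rmax tauF Rs -> Rs = Rstar) ->
  Rstar \o s = Rstar.
Proof. by move=> equil equil_uniq; apply/equil_uniq/is_equilibrium_perm. Qed.

End Relabelling.

Theorem theorem5 (R : realType) (n m W : nat) (e : R -> R) (Rmin Rmax : R)
    (tauF pF qF : ('I_n -> R) -> 'I_n -> R) (Rstar : 'I_n -> R) :
  (1 <= m)%N -> (0 < W)%N -> 0 <= Rmin <= Rmax ->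
  (* standing assumptions on the packet error rate function e *)
  (forall r, 0 <= r -> 0 <= e r <= 1) ->
  e 0 = 0 ->
  e x @[x --> +oo] --> (1 : R) ->
  (forall x y, Rmin <= x <= Rmax -> Rmin <= y <= Rmax -> x < y -> e x < e y) ->
  (forall x, Rmin <= x <= Rmax ->
     [/\ derivable e x 1, derivable (derive1 e) x 1 & 0 < derive1 e x]) ->
  (forall x y, Rmin <= x <= Rmax -> Rmin <= y <= Rmax -> x < y ->
     derive1 e x < derive1 e y) ->
  strictly_convex_on Rmin Rmax e ->
  goodput e 0 = 0 ->
  goodput e x @[x --> +oo] --> (0 : R) ->
  strictly_concave_on Rmin Rmax (goodput e) ->
  (* for every admissible profile, (tauF, pF, qF) is the unique stationary state *)
  (forall Rs, in_box Rmin Rmax Rs ->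
     (forall j, [/\ in01 (tauF Rs j), in01 (pF Rs j) & in01 (qF Rs j)]) /\
     stationary W m e Rs (tauF Rs) (pF Rs) (qF Rs)) ->
  (forall Rs, in_box Rmin Rmax Rs -> forall tau p q : 'I_n -> R,
     (forall j, [/\ in01 (tau j), in01 (p j) & in01 (q j)]) ->
     stationary W m e Rs tau p q ->
     [/\ tau = tauF Rs, p = pF Rs & q = qF Rs]) ->
  (* Rstar is the unique equilibrium of G_R(W) *)
  is_equilibrium e Rmin Rmax tauF Rstar ->
  (forall Rs, is_equilibrium e Rmin Rmax tauF Rs -> Rs = Rstar) ->
  (* first-order condition dS_i/dR_i = 0 at the (interior) equilibrium *)
  (forall i : 'I_n,
     let Si := fun r => utility e (tauF (upd Rstar i r)) i (upd Rstar i r) in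
     [/\ Rmin < Rstar i < Rmax, derivable Si (Rstar i) 1 & derive1 Si (Rstar i) = 0]) ->
  forall i j : 'I_n,
    Rstar i = Rstar j /\ 1 - tauF Rstar i = 1 - tauF Rstar j.
Proof.
move=> _ _ _ _ _ _ _ _ _ _ _ _ _ stF st_uniq equil equil_uniq _ i j.
have Rstar_swap := unique_equilibrium_perm stF st_uniq (tperm i j) equil equil_uniq.
have tau_swap : tauF Rstar \o tperm i j = tauF Rstar.
  have box : in_box Rmin Rmax Rstar by case: equil.
  by rewrite -(tauF_perm stF st_uniq (tperm i j) box) Rstar_swap.
split.
- by rewrite -[in LHS]Rstar_swap /= tpermL.
- by rewrite -[in LHS]tau_swap /= tpermL.
Qed.
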